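(* Let $n\ge 2$ and let $\mathrm{Dic}_n=\langle a,b : a^n=b^2,\ a^{2n}=e,\ b^{-1}ab=a^{-1}\rangle$ be the dicyclic group of order $4n$. Let $H$ be a normal subgroup of $\mathrm{Dic}_n$. Then $\Gamma_{\mathrm{Dic}_n,H}$ admits a perfect code if and only if either $H=\mathrm{Dic}_n$, or $H=\langle a^t\rangle$ for a positive divisor $t$ of $2n$ such that $2n/t$ is odd or $2n/t=2$.
   Context: For a normal subgroup $H$ of a finite group $G$ with identity $e$, the subgroup sum graph $\Gamma_{G,H}$ is the simple undirected graph with vertex set $G$ in which distinct vertices $x,y$ are adjacent if and only if $xy\in H\setminus\{e\}$. A perfect code in a graph is a set $C$ of vertices that is independent and such that every vertex not in $C$ is adjacent to exactly one vertex of $C$. *)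

From mathcomp Require Import all_boot all_fingroup.
Set Implicit Arguments. Unset Strict Implicit. Unset Printing Implicit Defensive.
Local Open Scope group_scope.

Definition ssg_adj (gT : finGroupType) (H : {set gT}) (x y : gT) : bool :=
  (x != y) && (x * y \in H :\ 1).

Definition ssg_perfect_code (gT : finGroupType) (G H C : {set gT}) : Prop :=
  [/\ C \subset G,
      {in C &, forall x y, ~~ ssg_adj H x y}
    & {in G :\: C, forall x, #|[set c in C | ssg_adj H x c]| = 1%N}].

Definition is_dicyclic (gT : finGroupType) (G : {set gT}) (n : nat) (a b : gT) : Prop :=
  [/\ G = <<[set a; b]>>, a ^+ n = b ^+ 2, a ^+ (2 * n) = 1,
      a ^ b = a^-1 & #|G| = (4 * n)%N].

From mathcomp Require Import all_boot all_fingroup all_solvable.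
Set Implicit Arguments. Unset Strict Implicit. Unset Printing Implicit Defensive.
Local Open Scope group_scope.

(* For normal H, x and y are adjacent iff y lies in x^-1 H and y <> x, x^-1, so
   every edge stays inside one of the classes xH u x^-1 H, which partition G.
   A perfect code exists iff every coset xH with x^2 in H contains an element
   of square 1, unless |H| <= 2.  If so, choosing in each class such an element,
   or else a pair {r, r^-1}, gives a perfect code.  Conversely, a codeword c with
   c^-1 <> c in such a coset xH forces c^-1 to be a codeword too (otherwise the
   codeword dominating c^-1 would be adjacent to c), and then any third element
   of xH is dominated twice.  The condition holds when |H| <= 2, when H = G, and
   when |H| is odd, x^|H| = x (x^2)^((|H|-1)/2) being a square root of 1 in xH.
   In Dic_n the square roots of 1 are 1 and a^n.  A normal subgroup containing
   some a^i b contains a^n = (a^i b)^2 and the commutator a^2, and the condition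
   at x = a forces H = G; a subgroup of <a> of even order > 2 contains a^n = b^2,
   and the condition at x = b would put b in <a>. *)

Definition sym_coset (gT : finGroupType) (H : {set gT}) (x : gT) : {set gT} :=
  x *: H :|: x^-1 *: H.

Lemma sqr1_invg (gT : finGroupType) (y : gT) : y ^+ 2 = 1 -> y^-1 = y.
Proof. by move=> y2; apply/eqP; rewrite eq_invg_mul -expg2 y2. Qed.

Lemma lcoset_sub (gT : finGroupType) (G H : {group gT}) x :
  H \subset G -> x \in G -> x *: H \subset G.
Proof. by move=> sHG xG; rewrite -sub_lcosetV lcoset_id ?groupV. Qed.

Section NormalCosets.

Variables (gT : finGroupType) (G H : {group gT}).
Hypothesis nHG : H <| G.

Let sHG : H \subset G := normal_sub nHG.

Lemma lcosetV x : x \in G -> (x *: H)^-1 = x^-1 *: H.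
Proof.
by move=> xG; rewrite invg_lcoset norm_rlcoset // (subsetP (normal_norm nHG)) ?groupV.
Qed.

Lemma memV_lcoset x y : x \in G -> (y^-1 \in x^-1 *: H) = (y \in x *: H).
Proof. by move=> xG; rewrite -lcosetV // inE invgK. Qed.

Lemma mulg_mem_lcoset x y z :
  x \in G -> y \in x *: H -> (y * z \in H) = (z \in x^-1 *: H).
Proof.
move=> xG yxH; have /lcoset_eqP <- : y^-1 \in x^-1 *: H by rewrite memV_lcoset.
by rewrite mem_lcoset invgK.
Qed.

Lemma ssg_adj_lcoset x y z : x \in G -> y \in x *: H ->
  ssg_adj H y z = [&& y != z, y * z != 1 & z \in x^-1 *: H].
Proof. by move=> xG yxH; rewrite /ssg_adj in_setD1 (mulg_mem_lcoset z xG yxH). Qed.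

Lemma sqr_lcoset x : x \in G -> (x ^+ 2 \in H) = (x^-1 *: H == x *: H).
Proof.
move=> xG; apply/idP/eqP => [x2H | eqxH].
  by apply/lcoset_eqP; rewrite mem_lcoset -invMg groupV -expg2.
by rewrite expg2 (mulg_mem_lcoset _ xG) ?eqxH lcoset_refl.
Qed.

Lemma sym_coset_refl x : x \in sym_coset H x.
Proof. by rewrite inE lcoset_refl. Qed.

Lemma sym_coset_sub x : x \in G -> sym_coset H x \subset G.
Proof. by move=> xG; rewrite subUset !lcoset_sub ?groupV. Qed.

Lemma sym_coset_eq x y : x \in G -> y \in sym_coset H x -> sym_coset H y = sym_coset H x.
Proof.
move=> xG yU; have yG := subsetP (sym_coset_sub xG) y yU.
rewrite /sym_coset -lcosetV // -[x^-1 *: H]lcosetV ?groupV //.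
by case/setUP: yU => /lcoset_eqP->; rewrite ?lcosetV ?invgK ?groupV // setUC.
Qed.

End NormalCosets.

Lemma ssg_adjE (gT : finGroupType) (H : {set gT}) x y :
  ssg_adj H x y = [&& x != y, x * y != 1 & y \in x^-1 *: H].
Proof. by rewrite /ssg_adj in_setD1 mem_lcoset invgK. Qed.

Lemma ssg_adj_sym_coset (gT : finGroupType) (H : {set gT}) x y :
  ssg_adj H x y -> y \in sym_coset H x.
Proof. by rewrite ssg_adjE inE => /and3P[_ _ ->]; rewrite orbT. Qed.

Definition sqrt1 (gT : finGroupType) (A : {set gT}) : {set gT} :=
  [set y in A | y ^+ 2 == 1].

Definition code_block (gT : finGroupType) (H : {set gT}) (x : gT) : {set gT} :=
  let U := sym_coset H x in
  if sqrt1 U != set0 then [set repr (sqrt1 U)] else [set repr U; (repr U)^-1].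

Definition ssg_code (gT : finGroupType) (G H : {set gT}) : {set gT} :=
  [set x in G | x \in code_block H x].

Definition sqrt1_in_square_cosets (gT : finGroupType) (G H : {set gT}) : Prop :=
  {in G, forall x, x ^+ 2 \in H -> 2 < #|H| ->
     exists2 y, y \in x *: H & y ^+ 2 = 1}.

Section PerfectCodeObstruction.

Variables (gT : finGroupType) (G H : {group gT}) (C : {set gT}).
Hypotheses (nHG : H <| G) (codeC : ssg_perfect_code G H C).

Lemma perfect_code_meets_sym_coset x :
  x \in G -> exists2 c, c \in C & c \in sym_coset H x.
Proof.
case: codeC => _ _ domC xG; case xC: (x \in C); first by exists x; rewrite ?sym_coset_refl.
have /cards1P[c cE] : #|[set c in C | ssg_adj H x c]| == 1%N by rewrite domC // inE xC.
have : c \in [set c in C | ssg_adj H x c] by rewrite cE set11.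
by rewrite inE => /andP[cC /ssg_adj_sym_coset]; exists c.
Qed.

Variable x : gT.
Hypotheses (xG : x \in G) (x2 : x ^+ 2 \in H).

Let xVH : x^-1 *: H = x *: H.
Proof. by apply/eqP; rewrite -(sqr_lcoset nHG xG). Qed.

Let adjK y z : y \in x *: H -> ssg_adj H y z = [&& y != z, y * z != 1 & z \in x *: H].
Proof. by move=> yxH; rewrite (ssg_adj_lcoset nHG z xG yxH) xVH. Qed.

Let invK y : y \in x *: H -> y^-1 \in x *: H.
Proof. by rewrite -xVH (memV_lcoset nHG) // xVH. Qed.

Let sKG : x *: H \subset G := lcoset_sub (normal_sub nHG) xG.

Lemma perfect_code_sqr_coset_memV c :
  c \in C -> c \in x *: H -> c^-1 \in C.
Proof.
case: codeC => _ indC domC cC cK; apply: contraT => cVC.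
have := domC c^-1; rewrite inE cVC (subsetP sKG) ?invK // => /(_ isT) /eqP/cards1P[d dE].
have : d \in [set d in C | ssg_adj H c^-1 d] by rewrite dE set11.
rewrite inE adjK ?invK // => /andP[dC /and3P[cVd cVd1 dK]].
have : ssg_adj H c d.
  rewrite adjK // dK andbT -eq_invg_mul eq_sym cVd andbT.
  by apply: contraNneq cVd1 => <-; rewrite mulVg.
by rewrite (negbTE (indC _ _ cC dC)).
Qed.

Lemma perfect_code_sqr_coset_notinV c :
  2 < #|H| -> c \in C -> c \in x *: H -> c^-1 != c -> c^-1 \notin C.
Proof.
case: codeC => _ indC domC H3 cC cK cVc; apply/negP => cVC.
have [z zK] : exists2 z, z \in x *: H & z \notin [set c; c^-1].
  apply/subsetPn; apply: contraTN H3 => /subset_leq_card.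
  by rewrite card_lcoset cards2 -leqNgt => /leq_trans; apply; case: (c != c^-1).
rewrite !inE negb_or => /andP[zc zcV].
have zcA : ssg_adj H z c by rewrite adjK // zc cK -eq_invg_mul (inv_eq invgK) zcV.
have zcVA : ssg_adj H z c^-1 by rewrite adjK ?invK // zcV -eq_invg_mul (inj_eq invg_inj) zc.
have zC : z \notin C by apply: contraL zcA => zC; exact: indC.
have := domC z; rewrite inE zC (subsetP sKG) // => /(_ isT) card1.
have : [set c; c^-1] \subset [set d in C | ssg_adj H z d].
  by rewrite subUset !sub1set !inE cC cVC zcA zcVA.
by move/subset_leq_card; rewrite card1 cards2 eq_sym cVc.
Qed.

Lemma perfect_code_sqr_coset_sqrt1 :
  2 < #|H| -> exists2 y, y \in x *: H & y ^+ 2 = 1.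
Proof.
move=> H3; have [c cC] := perfect_code_meets_sym_coset xG.
rewrite /sym_coset xVH setUid => cK; exists c => //.
case: (eqVneq c^-1 c) => [cV | cVc]; first by rewrite expg2 -{1}cV mulVg.
by have := perfect_code_sqr_coset_notinV H3 cC cK cVc; rewrite perfect_code_sqr_coset_memV.
Qed.

End PerfectCodeObstruction.

Section PerfectCodeConstruction.

Variables (gT : finGroupType) (G H : {group gT}).
Hypothesis nHG : H <| G.

Lemma code_block_eq x y :
  x \in G -> y \in sym_coset H x -> code_block H y = code_block H x.
Proof. by move=> xG yU; rewrite /code_block (sym_coset_eq nHG xG yU). Qed.

Lemma mem_ssg_code x y :
  x \in G -> y \in sym_coset H x -> (y \in ssg_code G H) = (y \in code_block H x).
Proof.
move=> xG yU; rewrite inE (subsetP (sym_coset_sub nHG xG) y yU).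
by rewrite (code_block_eq xG yU).
Qed.

Lemma code_block_indep x c d :
  c \in code_block H x -> d \in code_block H x -> ~~ ssg_adj H c d.
Proof.
rewrite ssg_adjE /code_block; case: ifP => _.
  by rewrite !inE => /eqP-> /eqP->; rewrite eqxx.
by rewrite !inE => /orP[]/eqP-> /orP[]/eqP->; rewrite ?mulgV ?mulVg eqxx ?andbF.
Qed.

Lemma ssg_code_indep : {in ssg_code G H &, forall c d, ~~ ssg_adj H c d}.
Proof.
move=> c d cC dC; apply/negP => cd; have dU := ssg_adj_sym_coset cd.
have cG : c \in G by move: cC; rewrite inE => /andP[].
move: cC dC; rewrite !(mem_ssg_code cG) ?sym_coset_refl // => cB dB.
by move: (code_block_indep cB dB); rewrite cd.
Qed.

Lemma ssg_code_neighbours x : x \in G ->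
  [set c in ssg_code G H | ssg_adj H x c] = [set c in code_block H x | ssg_adj H x c].
Proof.
move=> xG; apply/setP => c; rewrite [LHS]in_set [RHS]in_set.
by case xc: (ssg_adj H x c); rewrite ?andbF // (mem_ssg_code xG (ssg_adj_sym_coset xc)).
Qed.

Lemma code_block_neighbours_sqrt1 x :
  x \in G -> x \notin code_block H x -> sqrt1 (sym_coset H x) != set0 ->
  [set c in code_block H x | ssg_adj H x c] = [set repr (sqrt1 (sym_coset H x))].
Proof.
rewrite /code_block => xG + S0; rewrite S0 inE; set s := repr _ => xs.
have /set0Pn[y yS] := S0; have := mem_repr _ yS; rewrite -/s inE => /andP[sU /eqP s2].
apply/setP => c; rewrite !inE; case: eqP => [-> | _] //=.
rewrite ssg_adjE xs /=; apply/andP; split.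
  by apply: contra xs; rewrite -eq_invg_mul -{1}(sqr1_invg s2) (inj_eq invg_inj).
by case/setUP: sU => // sxH; rewrite -(sqr1_invg s2) (memV_lcoset nHG).
Qed.

Lemma code_block_neighbours_pair x :
  x \in G -> x ^+ 2 \notin H -> x \notin code_block H x ->
  sqrt1 (sym_coset H x) = set0 ->
  exists c, [set c in code_block H x | ssg_adj H x c] = [set c].
Proof.
rewrite /code_block => xG x2 + S0; rewrite S0 eqxx /=; set r := repr _.
rewrite !inE negb_or => /andP[xr xrV].
have rU : r \in sym_coset H x := mem_repr _ (sym_coset_refl H x).
have adjE (c : gT) : c \in [set r; r^-1] -> ssg_adj H x c = (c \in x^-1 *: H).
  rewrite ssg_adjE !inE => /orP[]/eqP->; rewrite ?xr ?xrV -eq_invg_mul /=.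
    by rewrite (inv_eq invgK) xrV.
  by rewrite (inj_eq invg_inj) xr.
have disjH y : y \in x *: H -> y \in x^-1 *: H -> False.
  move=> /lcoset_eqP exH /lcoset_eqP exVH; case/negP: x2.
  by rewrite (sqr_lcoset nHG xG) -exH -exVH.
have [c [cB cxH cVxH]] : exists c,
    [/\ [set r; r^-1] = [set c; c^-1], c \in x^-1 *: H & c^-1 \notin x^-1 *: H].
  case/setUP: rU => rxH; [exists r^-1 | exists r]; rewrite ?invgK.
  - split; [by rewrite setUC | by rewrite (memV_lcoset nHG) |].
    by apply/negP; apply: disjH.
  - split => //; apply/negP; rewrite (memV_lcoset nHG) // => /disjH; exact.
exists c; apply/setP => d; rewrite in_set cB.
case dB: (d \in [set c; c^-1]); last by move: dB; rewrite !inE; case: eqP.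
rewrite adjE ?cB //; move: dB; rewrite !inE => /orP[]/eqP->; rewrite ?eqxx ?cxH //.
by rewrite (negbTE cVxH); apply/esym/negbTE; apply: contraNneq cVxH => ->.
Qed.

Lemma code_block_sqr_coset x :
  sqrt1_in_square_cosets G H -> x \in G -> x ^+ 2 \in H ->
  sqrt1 (sym_coset H x) = set0 -> x \in code_block H x.
Proof.
move=> sqrtH xG x2 S0; have xVH : x^-1 *: H = x *: H.
  by apply/eqP; rewrite -(sqr_lcoset nHG xG).
have UE : sym_coset H x = x *: H by rewrite /sym_coset xVH setUid.
have H2 : #|H| <= 2.
  rewrite leqNgt; apply/negP => /(sqrtH x xG x2)[y yxH y2].
  by have := in_set0 y; rewrite -S0 inE UE yxH y2 eqxx.
rewrite /code_block S0 eqxx /=; set r := repr _; apply: contraT => xB.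
have rU : r \in x *: H by rewrite -UE (mem_repr _ (sym_coset_refl H x)).
have rVr : r^-1 != r.
  apply/eqP => rV; move: (in_set0 r).
  by rewrite -S0 UE inE rU expg2 -{1}rV mulVg eqxx.
have : x |: [set r; r^-1] \subset x *: H.
  by rewrite !subUset !sub1set lcoset_refl rU -(memV_lcoset nHG) // invgK xVH.
move/subset_leq_card; rewrite card_lcoset cardsU1 xB cards2 eq_sym rVr.
by move=> /leq_trans/(_ H2).
Qed.

Lemma ssg_code_perfect :
  sqrt1_in_square_cosets G H -> ssg_perfect_code G H (ssg_code G H).
Proof.
move=> sqrtH; split; first by apply/subsetP => x; rewrite inE => /andP[].
  exact: ssg_code_indep.
move=> x; rewrite inE => /andP[xC xG]; rewrite (ssg_code_neighbours xG).
have xB : x \notin code_block H x by rewrite inE xG in xC.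
case: (eqVneq (sqrt1 (sym_coset H x)) set0) => S0; last first.
  by rewrite (code_block_neighbours_sqrt1 xG xB S0) cards1.
have x2 : x ^+ 2 \notin H by apply: contra xB => x2; exact: code_block_sqr_coset.
by have [c ->] := code_block_neighbours_pair xG x2 xB S0; rewrite cards1.
Qed.

End PerfectCodeConstruction.

Theorem ssg_perfect_codeP (gT : finGroupType) (G H : {group gT}) : H <| G ->
  (exists C, ssg_perfect_code G H C) <-> sqrt1_in_square_cosets G H.
Proof.
move=> nHG; split=> [[C codeC] x xG x2 | sqrtH].
  exact: perfect_code_sqr_coset_sqrt1 nHG codeC x xG x2.
by exists (ssg_code G H); apply: ssg_code_perfect.
Qed.

Section SquareCosetCriteria.

Variables (gT : finGroupType) (G H : {group gT}).

Lemma sqrt1_in_square_cosets_small : #|H| <= 2 -> sqrt1_in_square_cosets G H.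
Proof. by move=> H2 x _ _; rewrite ltnNge H2. Qed.

Lemma sqrt1_in_square_cosets_full : sqrt1_in_square_cosets G G.
Proof. by move=> x xG _ _; exists 1; rewrite ?expg1n // mem_lcoset mulg1 groupV. Qed.

Lemma sqrt1_in_square_cosets_odd : odd #|H| -> sqrt1_in_square_cosets G H.
Proof.
move=> oddH x _ x2 _; exists (x ^+ #|H|).
  rewrite mem_lcoset -(odd_double_half #|H|) oddH expgD expg1 mulKg.
  by rewrite -mul2n expgnA groupX.
by rewrite -expgnA mulnC expgnA (expg_cardG x2).
Qed.

Lemma sqrt1_in_square_cosets_mem x :
  H \subset G -> sqrt1_in_square_cosets G H ->
  {in G, forall y, y ^+ 2 = 1 -> y \in H} ->
  x \in G -> x ^+ 2 \in H -> 2 < #|H| -> x \in H.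
Proof.
move=> sHG sqrtH sqrt1H xG x2 H3; have [y yxH y2] := sqrtH x xG x2 H3.
have yH := sqrt1H y (subsetP (lcoset_sub sHG xG) y yxH) y2.
rewrite mem_lcoset in yxH.
by rewrite -groupV -(mulgK y x^-1) groupM ?groupV.
Qed.

End SquareCosetCriteria.

Lemma sub_cycleE (gT : finGroupType) (H : {group gT}) a :
  H \subset <[a]> -> H :=: <[a ^+ (#[a] %/ #|H|)]>.
Proof.
move=> sHa; have : H \in [set K : {group gT} | K \subset <[a]> & #|K| == #|H|].
  by rewrite inE sHa eqxx.
by rewrite cycle_sub_group ?cardSg // => /set1P {1}->.
Qed.

Section Dicyclic.

Variables (gT : finGroupType) (G : {group gT}) (n : nat) (a b : gT).
Hypotheses (n_gt0 : 0 < n) (dicG : is_dicyclic G n a b).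

Lemma dic_gens_mem : (a \in G) * (b \in G).
Proof. by case: dicG => -> *; rewrite !mem_gen // !inE eqxx ?orbT. Qed.

Lemma dic_Xb i : a ^+ i * b = b * (a ^+ i)^-1.
Proof. by case: dicG => _ _ _ ab _; rewrite conjgC conjXg ab expVgn. Qed.

Lemma dic_sqr i : (a ^+ i * b) ^+ 2 = a ^+ n.
Proof.
case: dicG => _ an _ _ _.
by rewrite expg2 {1}dic_Xb -mulgA mulKg -expg2 an.
Qed.

Lemma dic_elt x : x \in G -> exists i, x = a ^+ i \/ x = a ^+ i * b.
Proof.
case: dicG => GE an a2n ab _.
have nab : b \in 'N(<[a]>) by apply/normP; rewrite -cycleJ ab cycleV.
have -> : G :=: <[a]> * <[b]>.
  by rewrite -norm_joinEr ?cycle_subG // /cycle joing_idl joing_idr joingE GE.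
case/mulsgP=> _ _ /cycleP[i ->] /cycleP[j ->] ->.
have b4 : b ^+ 4 = 1 by rewrite (expgnA b 2 2) -an -expgnA mulnC a2n.
rewrite -(expg_mod _ b4); have : j %% 4 < 4 by rewrite ltn_pmod.
case: (j %% 4) => [|[|[|[|k]]]] // _.
- by exists i; left; rewrite mulg1.
- by exists i; right.
- by exists (i + n); left; rewrite -an expgD.
- by exists (i + n); right; rewrite expgSr -an expgD mulgA.
Qed.

Lemma dic_order : #[a] = (2 * n)%N.
Proof.
have le2n : #[a] <= (2 * n)%N.
  by case: dicG => _ _ a2n _ _; rewrite dvdn_leq ?muln_gt0 ?order_dvdn ?a2n.
have sGa : G \subset <[a]> :|: <[a]> :* b.
  apply/subsetP => x /dic_elt[i [->|->]]; rewrite inE ?mem_cycle //.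
  by rewrite mem_rcoset mulgK mem_cycle orbT.
have := leq_trans (subset_leq_card sGa) (leq_card_setU _ _).
case: dicG => _ _ _ _ ->; rewrite card_rcoset -orderE addnn -mul2n => le4n.
by apply/eqP; rewrite eqn_leq le2n -(leq_pmul2l (isT : 0 < 2)) mulnA.
Qed.

Lemma dic_notin_cycle : b \notin <[a]>.
Proof.
apply/negP => ba; have : G \subset <[a]>.
  by apply/subsetP => x /dic_elt[i [->|->]]; rewrite ?groupM ?mem_cycle.
case: dicG => _ _ _ _ cG /subset_leq_card; rewrite cG -orderE dic_order.
by rewrite leq_pmul2r // ltn_geF.
Qed.

Lemma dic_sqrt1 y : y \in G -> y ^+ 2 = 1 -> y = 1 \/ y = a ^+ n.
Proof.
case/dic_elt=> i [-> | ->]; last first.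
  rewrite dic_sqr => /eqP; rewrite -order_dvdn dic_order => /(dvdn_leq n_gt0).
  by rewrite -{2}(mul1n n) leq_pmul2r.
rewrite -expgnA => /eqP; rewrite -order_dvdn dic_order mulnC.
rewrite (dvdn_pmul2r (isT : 0 < 2)) => /dvdnP[k ->].
have an2 : (a ^+ n) ^+ 2 = 1 by rewrite -expgnA mulnC -dic_order expg_order.
rewrite mulnC expgnA -(expg_mod _ an2); have : k %% 2 < 2 by rewrite ltn_pmod.
by case: (k %% 2) => [|[|]] // _; [left | right].
Qed.

Lemma dic_sqrt1_sub (H : {group gT}) :
  a ^+ n \in H -> {in G, forall y, y ^+ 2 = 1 -> y \in H}.
Proof. by move=> anH y yG /(dic_sqrt1 yG)[]->. Qed.

Lemma dic_normal_sub_cycle (H : {group gT}) :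
  1 < n -> H <| G -> sqrt1_in_square_cosets G H -> H :!=: G -> H \subset <[a]>.
Proof.
move=> n_gt1 nHG sqrtH; have sHG := normal_sub nHG; have [aG bG] := dic_gens_mem.
apply: contraNT => /subsetPn[y yH yNa].
have [i [yE|yE]] := dic_elt (subsetP sHG y yH); first by rewrite yE mem_cycle in yNa.
have anH : a ^+ n \in H by rewrite -(dic_sqr i) -yE groupX.
have a2H : a ^+ 2 \in H.
  have : y ^ a^-1 * y^-1 \in H.
    by rewrite groupM ?groupV // memJ_norm // (subsetP (normal_norm nHG)) ?groupV.
  suff -> : y ^ a^-1 = a ^+ 2 * y by rewrite mulgK.
  have ba : b * a^-1 = a * b by rewrite -[a in RHS]expg1 dic_Xb.
  by rewrite conjgE invgK yE -!mulgA ba !mulgA -expgS -expgSr -expg2 -expgD add2n.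
have a21 : a ^+ 2 != 1.
  rewrite -order_dvdn dic_order -{2}(muln1 2) dvdn_pmul2l // dvdn1.
  by rewrite (gtn_eqF n_gt1).
have H3 : 2 < #|H|.
  have : 1 |: [set a ^+ 2; y] \subset H by rewrite !subUset !sub1set group1 a2H yH.
  move/subset_leq_card; apply: leq_trans.
  have ya z : z \in <[a]> -> z != y by move=> za; apply: contraNneq yNa => <-.
  by rewrite cardsU1 cards2 !inE negb_or eq_sym a21 !ya ?group1 ?mem_cycle.
have aH : a \in H.
  exact: sqrt1_in_square_cosets_mem sHG sqrtH (dic_sqrt1_sub anH) aG a2H H3.
have bH : b \in H by rewrite -(mulKg (a ^+ i) b) -yE groupM ?groupV ?groupX.
rewrite eqEsubset sHG; case: dicG => -> *.
by rewrite gen_subG subUset !sub1set aH bH.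
Qed.

Lemma dic_sub_cycle_card (H : {group gT}) :
  H \subset <[a]> -> sqrt1_in_square_cosets G H -> odd #|H| || (#|H| == 2).
Proof.
move=> sHa sqrtH; have [aG bG] := dic_gens_mem.
have sHG : H \subset G by rewrite (subset_trans sHa) ?cycle_subG.
case: (leqP #|H| 2) => [|H3].
  by have := cardG_gt0 H; case: #|H| => [|[|[|]]].
apply/orP; left; apply: contraT; rewrite -dvdn2 => evenH.
have [z zH oz] := Cauchy (isT : prime 2) evenH.
have z2 : z ^+ 2 = 1 by rewrite -oz expg_order.
have anH : a ^+ n \in H.
  have [z1 | <-] := dic_sqrt1 (subsetP sHG z zH) z2; last by [].
  by move: oz; rewrite z1 order1.
have b2 : b ^+ 2 \in H by case: dicG => _ <- *.
have := sqrt1_in_square_cosets_mem sHG sqrtH (dic_sqrt1_sub anH) bG b2 H3.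
by move/(subsetP sHa); rewrite (negbTE dic_notin_cycle).
Qed.

End Dicyclic.

Theorem theorem3p15 (gT : finGroupType) (G H : {group gT}) (n : nat) (a b : gT) :
  (2 <= n)%N -> is_dicyclic G n a b -> H <| G ->
  (exists C : {set gT}, ssg_perfect_code G H C) <->
  (H :=: G \/
   exists t : nat, [/\ (0 < t)%N, (t %| 2 * n)%N,
                       odd ((2 * n) %/ t) || ((2 * n) %/ t == 2)%N
                     & H :=: <[a ^+ t]>]).
Proof.
move=> n_gt1 dicG nHG; have n_gt0 := ltnW n_gt1.
have oa := dic_order n_gt0 dicG.
apply: iff_trans (ssg_perfect_codeP nHG) _.
split=> [sqrtH | [-> | [t [t_gt0 t_dvd oddH ->]]]].
- have [-> | neHG] := eqVneq (H : {set gT}) G; [by left | right].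
  have sHa := dic_normal_sub_cycle n_gt0 dicG n_gt1 nHG sqrtH neHG.
  have dvdH : (#|H| %| 2 * n)%N by rewrite -oa cardSg.
  exists ((2 * n) %/ #|H|)%N; split.
  + by rewrite divn_gt0 ?muln_gt0 // dvdn_leq ?muln_gt0.
  + exact: dvdn_div.
  + by rewrite divnA // mulKn ?muln_gt0 // (dic_sub_cycle_card n_gt0 dicG).
  + by rewrite -oa; apply: sub_cycleE.
- exact: sqrt1_in_square_cosets_full.
- have oH : #|<[a ^+ t]>| = ((2 * n) %/ t)%N by rewrite -orderE orderXdiv oa.
  case/orP: oddH => [oddH | /eqP H2].
  + by apply: sqrt1_in_square_cosets_odd; rewrite oH.
  + by apply: sqrt1_in_square_cosets_small; rewrite oH H2.
Qed.
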